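(* Let $M$ be a monoid in $\mathcal{C}$ and let $V=\mathbb{R}\otimes_\mathbb{Z}\mathrm{gp}(M)$. The following are equivalent: (a) $M$ is a UFM; (b) every face submonoid of $M$ is a UFM; (c) $|\mathcal{A}(M)|=\dim\mathsf{cone}_V(M)$.
   Context: Convention: all monoids are commutative, cancellative, and reduced (only invertible element $0$), written additively; $M^\bullet=M\setminus\{0\}$; atoms $\mathcal{A}(M)=M^\bullet\setminus(M^\bullet+M^\bullet)$. $\mathcal{C}$ is the class of monoids isomorphic to a submonoid of a free commutative monoid of finite rank (equivalently, of $(\mathbb{N}^d,+)$). $M$ is regarded as a submonoid of $V=\mathbb{R}\otimes_\mathbb{Z}\mathrm{gp}(M)$ via $M\hookrightarrow\mathrm{gp}(M)\hookrightarrow V$; $\mathsf{cone}_V(M)$ is the set of finite nonnegative real linear combinations of elements of $M$, and its dimension is that of its linear span. A face of a cone $C$ is a cone $F\subseteq C$ such that whenever $x,y\in C$ and $F$ meets the open segment $\{tx+(1-t)y:0<t<1\}$, then $x,y\in F$. A face submonoid of $M$ is a submonoid $M\cap F$ with $F$ a face of $\mathsf{cone}_V(M)$. A monoid is a UFM (unique factorization monoid) if every element is a sum of atoms and this sum is unique up to order (equivalently, every nonzero element is a sum of prime elements). *)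

From HB Require Import structures.
From mathcomp Require Import all_boot all_order all_algebra.
Set Implicit Arguments. Unset Strict Implicit. Unset Printing Implicit Defensive.
Import Order.TTheory GRing.Theory Num.Theory.
Local Open Scope ring_scope.

(* A monoid in the class C is represented (up to isomorphism) as a submonoid
   M of the free commutative monoid (N^d, +), realised as 'rV[nat]_d. *)
Definition submonoid (d : nat) (M : 'rV[nat]_d -> Prop) : Prop :=
  M 0 /\ (forall x y, M x -> M y -> M (x + y)).

Definition atom (d : nat) (N : 'rV[nat]_d -> Prop) (a : 'rV[nat]_d) : Prop :=
  N a /\ a != 0 /\
  ~ (exists b c, N b /\ b != 0 /\ N c /\ c != 0 /\ a = b + c).

Definition UFM (d : nat) (N : 'rV[nat]_d -> Prop) : Prop :=
  (forall x, N x -> exists s : seq 'rV[nat]_d,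
       (forall a, a \in s -> atom N a) /\ x = \sum_(a <- s) a) /\
  (forall s t : seq 'rV[nat]_d,
       (forall a, a \in s -> atom N a) -> (forall a, a \in t -> atom N a) ->
       \sum_(a <- s) a = \sum_(a <- t) a -> perm_eq s t).

(* The embedding N^d -> R^d (V = R (x) gp(M) is identified with the span of M in R^d). *)
Definition embed (R : realFieldType) (d : nat) (x : 'rV[nat]_d) : 'rV[R]_d :=
  map_mx (fun n : nat => n%:R) x.

Definition cone (R : realFieldType) (d : nat) (M : 'rV[nat]_d -> Prop)
    (v : 'rV[R]_d) : Prop :=
  exists s : seq (R * 'rV[nat]_d),
    (forall p, p \in s -> 0 <= p.1 /\ M p.2) /\
    v = \sum_(p <- s) p.1 *: embed R p.2.

Definition is_cone (R : realFieldType) (d : nat) (F : 'rV[R]_d -> Prop) : Prop :=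
  F 0 /\ (forall x y, F x -> F y -> F (x + y)) /\
  (forall (t : R) x, 0 <= t -> F x -> F (t *: x)).

Definition face (R : realFieldType) (d : nat) (C F : 'rV[R]_d -> Prop) : Prop :=
  is_cone F /\ (forall x, F x -> C x) /\
  (forall x y, C x -> C y ->
     (exists t : R, 0 < t /\ t < 1 /\ F (t *: x + (1 - t) *: y)) ->
     F x /\ F y).

Definition face_submonoid (R : realFieldType) (d : nat) (M : 'rV[nat]_d -> Prop)
    (F : 'rV[R]_d -> Prop) (x : 'rV[nat]_d) : Prop :=
  M x /\ F (embed R x).

Definition has_dim (R : realFieldType) (d : nat) (C : 'rV[R]_d -> Prop) (n : nat)
    : Prop :=
  exists s : seq 'rV[R]_d,
    (forall v, v \in s -> C v) /\ free s /\ size s = n /\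
    (forall v, C v -> v \in <<s>>%VS).

Arguments cone R [d] M v.
Arguments embed R [d] x.

(* In a UFM these
     coefficients are unique; clearing denominators of a rational relation
     then shows that the atoms are linearly independent over Q, hence over R.
   - A bounded family of pairwise distinct atoms is finite, so a UFM has a
     duplicate-free list of all its atoms, a basis of the span of cone M.
   - Conversely, if the atoms are as many as dim cone M, they span it and are
     therefore linearly independent, which forces unique factorization. *)

From HB Require Import structures.
From mathcomp Require Import all_boot all_order all_algebra.
From Stdlib Require Import Classical.
From mathcomp Require Import zify.
Set Implicit Arguments. Unset Strict Implicit. Unset Printing Implicit Defensive.
Import Order.TTheory GRing.Theory Num.Theory.
Local Open Scope ring_scope.

Lemma bounded_enum (T : eqType) (A : T -> Prop) (n : nat) :
  (forall s : seq T, uniq s -> (forall x, x \in s -> A x) -> (size s <= n)%N) ->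
  exists s : seq T, uniq s /\ forall x, x \in s <-> A x.
Proof.
move=> bound.
pose sample (s : seq T) := uniq s /\ forall x, x \in s -> A x.
have extend s x : sample s -> A x -> x \notin s ->
    sample (x :: s) /\ (size s < n)%N.
  move=> [us As] Ax xs; have ext : sample (x :: s).
    by split=> [|y]; [rewrite /= xs | rewrite inE => /orP [/eqP -> | /As]].
  by split=> //; case: ext => ue Ae; exact: (bound _ ue Ae).
have complete s : sample s -> ~ (exists x, A x /\ x \notin s) ->
    exists t : seq T, uniq t /\ forall x, x \in t <-> A x.
  move=> [us As] no_new; exists s; split=> // x; split=> [/As // | Ax].
  by apply: NNPP => /negP xs; apply: no_new; exists x.
suff grow k s : sample s -> (n - size s <= k)%N ->
    exists t : seq T, uniq t /\ forall x, x \in t <-> A x.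
  by apply: (grow n [::]); rewrite ?subn0.
elim: k s => [|k IH] s s_ok hk.
all: case: (classic (exists x, A x /\ x \notin s)) => [[x [Ax xs]] | no_new];
  last exact: complete s s_ok no_new.
all: have [ext lt_sn] := extend s x s_ok Ax xs.
- by move: hk lt_sn; lia.
- by apply: (IH _ ext) => /=; move: hk lt_sn; lia.
Qed.

Section Embedding.
Variables (R : realFieldType) (d : nat).
Implicit Types x y : 'rV[nat]_d.

Lemma embed0 : embed R (0 : 'rV[nat]_d) = 0.
Proof. by apply/matrixP => i j; rewrite !mxE. Qed.

Lemma embedD x y : embed R (x + y) = embed R x + embed R y.
Proof. by apply/matrixP => i j; rewrite !mxE natrD. Qed.

Lemma embed_sum (I : Type) (r : seq I) (F : I -> 'rV[nat]_d) :
  embed R (\sum_(i <- r) F i) = \sum_(i <- r) embed R (F i).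
Proof.
elim: r => [|a r IH]; first by rewrite !big_nil embed0.
by rewrite !big_cons embedD IH.
Qed.

Lemma embedMn x k : embed R (x *+ k) = embed R x *+ k.
Proof. by elim: k => [|k IH]; rewrite ?mulr0n ?embed0 // !mulrS embedD IH. Qed.

Lemma nth_embed (s : seq 'rV[nat]_d) i : (i < size s)%N ->
  (map (@embed R d) s)`_i = embed R s`_i.
Proof. by move=> lt_is; rewrite -embed0 (nth_map 0). Qed.

End Embedding.

Section Atomicity.
Variable d : nat.
Implicit Types (M : 'rV[nat]_d -> Prop) (x y : 'rV[nat]_d).

Definition weight x : nat := (\sum_j x ord0 j)%N.

Lemma weightD x y : weight (x + y) = (weight x + weight y)%N.
Proof. by rewrite /weight -big_split /=; apply: eq_bigr => j _; rewrite mxE. Qed.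

Lemma weight_eq0 x : (weight x == 0%N) = (x == 0).
Proof.
rewrite /weight sum_nat_eq0; apply/forallP/eqP => [x0 | -> j]; last by rewrite mxE.
by apply/matrixP => i j; rewrite ord1 mxE; apply/eqP/x0.
Qed.

Lemma submonoid_sum M (s : seq 'rV[nat]_d) : submonoid M ->
  (forall a, a \in s -> M a) -> M (\sum_(a <- s) a).
Proof.
move=> [M0 MD]; elim: s => [|a s IH] Ms; first by rewrite big_nil.
rewrite big_cons; apply: MD; first by apply: Ms; rewrite inE eqxx.
by apply: IH => b bs; apply: Ms; rewrite inE bs orbT.
Qed.

(* Every submonoid of N^d is atomic: a non-atom splits into two summands of
   smaller weight. *)
Lemma atomic M : submonoid M -> forall x, M x ->
  exists s : seq 'rV[nat]_d, (forall a, a \in s -> atom M a) /\ x = \sum_(a <- s) a.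
Proof.
move=> HM x; elim: {x}(weight x).+1 {-2}x (ltnSn (weight x)) => [//|n IH] x wx Mx.
have [->|x0] := eqVneq x 0; first by exists [::]; rewrite big_nil.
case: (classic (atom M x)) => [Ax | nAx].
  by exists [:: x]; split; [move=> a; rewrite inE => /eqP -> | rewrite big_seq1].
have [b [c [Mb [b0 [Mc [c0 Ex]]]]]] :
    exists b c, M b /\ b != 0 /\ M c /\ c != 0 /\ x = b + c.
  by apply: NNPP => split_x; apply: nAx; do !split.
rewrite Ex weightD in wx *; rewrite -!weight_eq0 in b0 c0.
have [sb [Ab ->]] : exists sb, (forall a, a \in sb -> atom M a) /\ b = \sum_(a <- sb) a.
  by apply: IH => //; move: wx c0; lia.
have [sc [Ac ->]] : exists sc, (forall a, a \in sc -> atom M a) /\ c = \sum_(a <- sc) a.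
  by apply: IH => //; move: wx b0; lia.
exists (sb ++ sc); split; last by rewrite big_cat.
by move=> a; rewrite mem_cat => /orP [/Ab | /Ac].
Qed.

End Atomicity.

Section Multiplicities.
Variable d : nat.
Implicit Types (M : 'rV[nat]_d -> Prop) (s u : seq 'rV[nat]_d).

Lemma sum_by_count s u : uniq s -> {subset u <= s} ->
  \sum_(a <- u) a = \sum_(i < size s) s`_i *+ count_mem s`_i u.
Proof.
move=> us; elim: u => [|a u IH] us_u.
  by rewrite big_nil big1 // => i _; rewrite mulr0n.
rewrite big_cons IH; last by move=> b bu; apply: us_u; rewrite inE bu orbT.
have a_s : a \in s by apply: us_u; rewrite inE eqxx.
under [RHS]eq_bigr => i _ do rewrite /= mulrnDr.
rewrite big_split /=; congr (_ + _).
rewrite (bigD1 (Ordinal (etrans (index_mem a s) a_s)))/= ?nth_index// eqxx mulr1n.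
rewrite big1 ?addr0 // => i ia.
rewrite -{1}(nth_index 0 a_s) eq_sym nth_uniq ?index_mem //.
suff /negbTE -> : i != index a s :> nat by rewrite mulr0n.
by apply: contra ia => /eqP ia; apply/eqP/val_inj.
Qed.

Definition replicate s (m : 'I_(size s) -> nat) : seq 'rV[nat]_d :=
  flatten [seq nseq (m i) s`_i | i <- enum 'I_(size s)].

Lemma replicate_sub s (m : 'I_(size s) -> nat) : {subset replicate m <= s}.
Proof.
move=> y /flatten_mapP [i _]; rewrite mem_nseq => /andP [_ /eqP ->].
exact: mem_nth.
Qed.

Lemma count_replicate s (m : 'I_(size s) -> nat) (j : 'I_(size s)) : uniq s ->
  count_mem s`_j (replicate m) = m j.
Proof.
move=> us; rewrite /replicate count_flatten -map_comp sumnE big_map big_enum /=.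
rewrite (bigD1 j) //= count_nseq /= eqxx mul1n big1 ?addn0 // => i ij.
by rewrite count_nseq /= nth_uniq // -[_ == _]/(i == j) (negbTE ij).
Qed.

Lemma sum_replicate s (m : 'I_(size s) -> nat) : uniq s ->
  \sum_(a <- replicate m) a = \sum_(i < size s) s`_i *+ m i.
Proof.
move=> us; rewrite (sum_by_count us (@replicate_sub s m)).
by apply: eq_bigr => i _; rewrite count_replicate.
Qed.

Lemma ufm_coef_uniq M s : UFM M -> uniq s -> (forall a, a \in s -> atom M a) ->
  forall m1 m2 : 'I_(size s) -> nat,
  \sum_(i < size s) s`_i *+ m1 i = \sum_(i < size s) s`_i *+ m2 i ->
  forall j, m1 j = m2 j.
Proof.
move=> [_ uniq_fact] us As m1 m2 E j.
have perm12 : perm_eq (replicate m1) (replicate m2).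
  by apply: uniq_fact => [a /replicate_sub/As | a /replicate_sub/As |] //;
     rewrite !sum_replicate.
by rewrite -(count_replicate m1 j us) -(count_replicate m2 j us); apply/permP.
Qed.

End Multiplicities.

Section Independence.
Variable d : nat.
Implicit Types (M : 'rV[nat]_d -> Prop) (s : seq 'rV[nat]_d).

Definition rows_mx (F : fieldType) s : 'M[F]_(size s, d) :=
  \matrix_(i, j) ((nth 0 s i) ord0 j)%:R.

Lemma clear_denominators n (q : 'I_n -> rat) : exists (D : int) (z : 'I_n -> int),
  D != 0 /\ forall i, (z i)%:~R = D%:~R * q i.
Proof.
exists (\prod_i denq (q i)), (fun i => numq (q i) * \prod_(k | k != i) denq (q k)).
split; first by rewrite prodf_seq_neq0; apply/allP => i _; rewrite denq_neq0.
move=> i; rewrite [in RHS](bigD1 i) //= !intrM numqE.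
by rewrite [RHS]mulrC mulrA.
Qed.

Definition pos_part (z : int) : nat := if (0 <= z)%R then `|z|%N else 0%N.
Definition neg_part (z : int) : nat := if (0 <= z)%R then 0%N else `|z|%N.

Lemma int_parts (z : int) : z = (pos_part z)%:Z - (neg_part z)%:Z.
Proof.
rewrite /pos_part /neg_part; case: ifP => z0; first by rewrite subr0 gez0_abs.
by rewrite sub0r ltz0_abs ?opprK // ltNge z0.
Qed.

Lemma natr_mulrn (F : pzSemiRingType) (x m : nat) : ((x *+ m)%:R : F) = x%:R *+ m.
Proof. by rewrite -[x *+ m]mulr_natr natn natrM mulr_natr. Qed.

(* In a UFM, distinct atoms are linearly independent over Q: a rational
   relation, once cleared of denominators and split by sign, equates two
   N-combinations, whose coefficients must then agree. *)
Lemma ufm_rat_free M s : UFM M -> uniq s -> (forall a, a \in s -> atom M a) ->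
  row_free (rows_mx rat s).
Proof.
move=> UM us As; apply: inj_row_free => q qA; apply/rowP => c; rewrite mxE.
have [D [z [D0 Dz]]] := clear_denominators (q ord0).
have relation : \sum_(k < size s) s`_k *+ pos_part (z k)
              = \sum_(k < size s) s`_k *+ neg_part (z k).
  apply/matrixP => r j; rewrite !summxE; apply/eqP.
  rewrite -(eqr_nat rat) !natr_sum -subr_eq0 -sumrB.
  have /matrixP/(_ ord0 j) := qA; rewrite !mxE => qAj.
  apply/eqP; transitivity ((D%:~R : rat) * \sum_k q ord0 k * rows_mx rat s k j).
    rewrite mulr_sumr; apply: eq_bigr => k _.
    rewrite ord1 !mxE mulrA -Dz [in RHS](int_parts (z k)) mulrzl mulrzBl_nat.
    by rewrite -!pmulrn !mulmxnE !natr_mulrn.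
  by rewrite qAj mulr0.
have same_parts := ufm_coef_uniq UM us As relation c.
have zc0 : z c = 0 by rewrite (int_parts (z c)) same_parts subrr.
move: (Dz c); rewrite zc0 mulr0z => /esym/eqP.
by rewrite mulf_eq0 intr_eq0 (negbTE D0) => /eqP.
Qed.

Lemma rat_free_real (R : realFieldType) s :
  row_free (rows_mx rat s) -> free (map (@embed R d) s).
Proof.
move=> free_rat.
have free_real : row_free (rows_mx R s).
  suff <- : map_mx (@ratr R) (rows_mx rat s) = rows_mx R s by rewrite row_free_map.
  by apply/matrixP => i j; rewrite !mxE ratr_nat.
apply/(@freeP _ _ _ (map_tuple (@embed R d) (in_tuple s))) => k k_rel i.
have /(row_free_inj free_real)/rowP/(_ i) : \row_j k j *m rows_mx R s = 0 *m rows_mx R s.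
  rewrite mul0mx; apply/rowP => c; rewrite !mxE.
  transitivity ((\sum_j k j *: (map (@embed R d) s)`_j) 0 c); last by rewrite k_rel mxE.
  by rewrite summxE; apply: eq_bigr => j _; rewrite !mxE nth_embed // !mxE.
by rewrite !mxE.
Qed.

End Independence.

Section Faces.
Variables (R : realFieldType) (d : nat).
Implicit Types (M N : 'rV[nat]_d -> Prop) (F : 'rV[R]_d -> Prop).

Lemma atom_ext N N' : (forall x, N x <-> N' x) -> forall a, atom N a -> atom N' a.
Proof.
move=> E a [Na [a0 indecomposable]]; split; first exact/E.
split=> // [[b [c [Nb [b0 [Nc [c0 Ea]]]]]]]; apply: indecomposable.
by exists b, c; rewrite !E.
Qed.

Lemma ufm_ext N N' : (forall x, N x <-> N' x) -> UFM N -> UFM N'.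
Proof.
move=> E [factor uniq_fact]; have E' : forall x, N' x <-> N x by move=> x; split=> /E.
split; last by move=> s t As At; apply: uniq_fact => a; [move/As | move/At];
                 apply: atom_ext.
move=> x /E /factor [s [As ->]]; exists s; split=> // a /As; exact: atom_ext.
Qed.

Lemma cone_mem M x : M x -> cone R M (embed R x).
Proof.
move=> Mx; exists [:: (1, x)]; rewrite big_seq1 scale1r; split=> //.
by move=> p; rewrite inE => /eqP ->.
Qed.

Lemma cone_is_cone M : is_cone (cone R M).
Proof.
split; first by exists [::]; rewrite big_nil.
split=> [x y [s1 [H1 ->]] [s2 [H2 ->]] | t x t0 [s [H ->]]].
  exists (s1 ++ s2); rewrite big_cat; split=> // p.
  by rewrite mem_cat => /orP [/H1 | /H2].
exists [seq (t * p.1, p.2) | p <- s]; split.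
  by move=> p /mapP [q /H [q1 q2] ->]; split=> //; apply: mulr_ge0.
by rewrite big_map scaler_sumr; apply: eq_bigr => p _; rewrite scalerA.
Qed.

Lemma cone_face M : face (cone R M) (cone R M).
Proof. by split; [exact: cone_is_cone | split]. Qed.

Lemma face_submonoid_cone M x : face_submonoid M (cone R M) x <-> M x.
Proof. by split=> [[] | Mx] //; split=> //; exact: cone_mem. Qed.

(* Faces are divisor-closed: if b + c lies in a face F, so does b.  Indeed
   b + c is the midpoint of 2b and 2c. *)
Lemma face_divisor_closed M F : face (cone R M) F -> forall b c, M b -> M c ->
  F (embed R (b + c)) -> F (embed R b).
Proof.
move=> [[_ [_ FZ]] [_ F_face]] b c Mb Mc Fbc.
have two0 : (2%:R : R) != 0 by rewrite pnatr_eq0.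
have double_in : forall y, M y -> cone R M (2%:R *: embed R y).
  move=> y My; exists [:: (2%:R, y)]; rewrite big_seq1; split=> //.
  by move=> p; rewrite inE => /eqP ->.
have [F2b _] : F (2%:R *: embed R b) /\ F (2%:R *: embed R c).
  apply: F_face; [exact: double_in | exact: double_in |].
  exists 2%:R^-1; rewrite invr_gt0 ltr0n invf_lt1 ?ltr0n // ltr1n; do 2!split=> //.
  have -> : (1 - 2%:R^-1 : R) = 2%:R^-1.
    by apply: (mulfI two0); rewrite mulrBr mulfV // mulr1 -addn1 natrD addrK.
  by rewrite !scalerA mulVf // !scale1r -embedD.
have -> : embed R b = 2%:R^-1 *: (2%:R *: embed R b) by rewrite scalerA mulVf ?scale1r.
by apply: FZ => //; rewrite invr_ge0 ler0n.
Qed.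

Lemma face_atom M F : face (cone R M) F -> forall a,
  atom (face_submonoid M F) a <-> atom M a /\ F (embed R a).
Proof.
move=> fF a; split=> [[[Ma Fa] [a0 indecomposable]] | [[Ma [a0 indecomposable]] Fa]].
  split=> //; split=> //; split=> // [[b [c [Mb [b0 [Mc [c0 Ea]]]]]]].
  apply: indecomposable; exists b, c; do !split=> //.
    by apply: (face_divisor_closed fF Mb Mc); rewrite -Ea.
  by apply: (face_divisor_closed fF Mc Mb); rewrite addrC -Ea.
split; first by split.
split=> // [[b [c [[Mb _] [b0 [[Mc _] [c0 Ea]]]]]]]; apply: indecomposable.
by exists b, c.
Qed.

(* Face submonoids of a UFM are UFMs: the atoms in a factorization of an
   element of the face are divisors of it, hence lie in the face. *)
Lemma ufm_face M F : submonoid M -> UFM M -> face (cone R M) F ->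
  UFM (face_submonoid M F).
Proof.
move=> HM [factor uniq_fact] fF; split=> [x [Mx Fx] | s t As At]; last first.
  by apply: uniq_fact => a; [move/As | move/At]; case/(face_atom fF).
have [s [As Ex]] := factor x Mx; exists s; split=> // a a_s.
apply/(face_atom fF); split; first exact: As.
move: Ex; rewrite (perm_big _ (perm_to_rem a_s)) big_cons => Ex.
apply: (face_divisor_closed fF (c := \sum_(y <- rem a s) y)); last by rewrite -Ex.
  by case: (As a a_s).
by apply: (submonoid_sum HM) => y /mem_rem /As [].
Qed.

End Faces.

Section Dimension.
Variables (R : realFieldType) (d : nat).
Implicit Types (M : 'rV[nat]_d -> Prop) (s : seq 'rV[nat]_d).

(* A list containing all atoms spans the cone, since M is atomic. *)
Lemma cone_span M s : submonoid M -> (forall a, atom M a -> a \in s) ->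
  forall v, cone R M v -> v \in <<map (@embed R d) s>>%VS.
Proof.
move=> HM As v [t [Ht ->]]; rewrite big_seq; apply: rpred_sum => p pt.
have [_ /(atomic HM) [u [Au ->]]] := Ht p pt.
rewrite embed_sum big_seq rpredZ // rpred_sum // => a au.
by apply/memv_span/map_f/As/Au.
Qed.

Lemma ufm_dim M : submonoid M -> UFM M -> exists s,
  uniq s /\ (forall a, a \in s <-> atom M a) /\ has_dim (cone R M) (size s).
Proof.
move=> HM UM.
have [s [us atoms_s]] : exists s, uniq s /\ forall a, a \in s <-> atom M a.
  apply: (@bounded_enum _ _ d) => t ut At.
  by rewrite -(eqP (ufm_rat_free UM ut At)) rank_leq_col.
have As : forall a, a \in s -> atom M a by move=> a /atoms_s.
exists s; do 2!split=> //; exists (map (@embed R d) s); do ![split].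
- by move=> v /mapP [a /As [Ma _] ->]; apply: cone_mem.
- exact/rat_free_real/(ufm_rat_free UM us As).
- by rewrite size_map.
- by apply: cone_span => // a /atoms_s.
Qed.

(* If the atoms number dim cone M, then they are linearly independent: they
   span a space containing the cone, of dimension at most their number. *)
Lemma atoms_free_of_dim M s : submonoid M -> (forall a, atom M a -> a \in s) ->
  has_dim (cone R M) (size s) -> free (map (@embed R d) s).
Proof.
move=> HM As [b [b_cone [free_b [size_b span_b]]]].
have sub_span : (<<b>> <= <<map (@embed R d) s>>)%VS.
  by apply/span_subvP => v /b_cone; apply: cone_span.
rewrite /free size_map -size_b -(eqP free_b); apply/eqP/anti_leq.
rewrite (dimvS sub_span) andbT (eqP free_b) size_b.
by rewrite -[X in (_ <= X)%N](size_map (@embed R d)) dim_span.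
Qed.

(* (c) => (a): factorizations over linearly independent atoms are unique,
   since their multiplicities are the coordinates of the element. *)
Lemma ufm_of_free_atoms M s : submonoid M -> uniq s ->
  (forall a, atom M a -> a \in s) -> free (map (@embed R d) s) -> UFM M.
Proof.
move=> HM us As free_s; split=> [|u w Au Aw E]; first exact: atomic.
have su : {subset u <= s} by move=> a /Au /As.
have sw : {subset w <= s} by move=> a /Aw /As.
have /(congr1 (@embed R d)) := E.
rewrite (sum_by_count us su) (sum_by_count us sw) !embed_sum => Eemb.
have same_count : forall i : 'I_(size s), count_mem s`_i u = count_mem s`_i w.
  move: free_s => /(@freeP _ _ _ (map_tuple (@embed R d) (in_tuple s))) coord0 i.
  apply/eqP; rewrite -(eqr_nat R) -subr_eq0; apply/eqP.
  apply: (coord0 (fun i => (count_mem s`_i u)%:R - (count_mem s`_i w)%:R)).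
  under eq_bigr => j _ do rewrite /= scalerBl !scaler_nat nth_embed // -!embedMn.
  by rewrite sumrB Eemb subrr.
apply/allP => x _ /=; have [x_s | x_notin_s] := boolP (x \in s).
  by have := same_count (Ordinal (etrans (index_mem x s) x_s)); rewrite /= nth_index // => ->.
rewrite (count_memPn (contra (@su x) x_notin_s)).
by rewrite (count_memPn (contra (@sw x) x_notin_s)).
Qed.

End Dimension.

Theorem mainTheorem7 (R : realFieldType) (d : nat) (M : 'rV[nat]_d -> Prop)
    (HM : submonoid M) :
  (UFM M <-> (forall F : 'rV[R]_d -> Prop,
                 face (cone R M) F -> UFM (face_submonoid M F))) /\
  (UFM M <-> exists s : seq 'rV[nat]_d,
                uniq s /\ (forall a, a \in s <-> atom M a) /\
                has_dim (cone R M) (size s)).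
Proof.
split; split.
- by move=> UM F; apply: ufm_face.
- move=> faces_ufm; apply: (@ufm_ext _ (face_submonoid M (cone R M))).
    exact: face_submonoid_cone.
  exact/faces_ufm/cone_face.
- exact: ufm_dim.
- move=> [s [us [atoms_s dim_s]]].
  have As : forall a, atom M a -> a \in s by move=> a /atoms_s.
  exact: (ufm_of_free_atoms HM us As (atoms_free_of_dim HM As dim_s)).
Qed.
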